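(* For every graph $G$ (such that $G$ and its complement $G^c$ have no isolated vertices), $B_d^t(G)+B_d^t(G^c)\geq 2$.
   Context: A total dominator coloring (TD-coloring) of a graph $G$ with no isolated vertex is a proper vertex coloring of $G$ in which every vertex is adjacent to every vertex of some color class. The total dominator chromatic number $\chi_d^t(G)$ is the minimum number of colors in a TD-coloring of $G$. The TDC-bondage number $B_d^t(G)$ is the minimum number of edges of $G$ whose removal changes the total dominator chromatic number of $G$. $G^c$ denotes the complement of $G$. *)

From mathcomp Require Import all_boot.
Set Implicit Arguments. Unset Strict Implicit. Unset Printing Implicit Defensive.

Section TDC.
Variable V : finType.

Definition simple_graph (e : rel V) : Prop := symmetric e /\ irreflexive e.

Definition no_isolated (e : rel V) : bool := [forall v, exists u, e v u].

Definition compl_graph (e : rel V) : rel V := fun x y => (x != y) && ~~ e x y.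

Definition edge_set (e : rel V) : {set {set V}} :=
  [set [set x; y] | x in V, y in V & e x y].

Definition remove_edges (e : rel V) (F : {set {set V}}) : rel V :=
  fun x y => e x y && ([set x; y] \notin F).

(* c : V -> 'I_k is a total dominator coloring using (at most) k colours:
   proper, and every vertex is adjacent to every vertex of some
   (nonempty) colour class, namely the class of some vertex u. *)
Definition td_coloring (e : rel V) (k : nat) (c : {ffun V -> 'I_k}) : bool :=
  [forall x, forall y, e x y ==> (c x != c y)] &&
  [forall v, exists u, forall w, (c w == c u) ==> e v w].

Definition td_colorable (e : rel V) (k : nat) : bool :=
  [exists c : {ffun V -> 'I_k}, td_coloring e c].

(* Any TD-colouring needs at most #|V| colours, so searching
   k in 0..#|V| suffices; if none exists (G has an isolated vertex) the
   value is #|V|.+1, playing the role of "infinity". *)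
Definition chi_td (e : rel V) : nat :=
  find (td_colorable e) (iota 0 #|V|.+1).

(* TDC-bondage number: least number of edges of G whose removal changes
   chi_td (default #|E(G)|.+1 if no such edge set exists). *)
Definition tdc_bondage (e : rel V) : nat :=
  find (fun m => [exists F : {set {set V}},
                   [&& F \subset edge_set e, #|F| == m &
                       chi_td (remove_edges e F) != chi_td e]])
       (iota 0 #|edge_set e|.+1).

End TDC.

From mathcomp Require Import all_boot.
From Stdlib Require Import FunctionalExtensionality.

(* Removing no edges cannot change the total dominator chromatic number, so
   every TDC-bondage number is positive; the bound is the sum of two such. *)

Lemma remove_edges0 (V : finType) (e : rel V) : remove_edges e set0 = e.
Proof.
apply: functional_extensionality => x; apply: functional_extensionality => y.
by rewrite /remove_edges inE andbT.
Qed.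

Lemma tdc_bondage_gt0 (V : finType) (e : rel V) : 0 < tdc_bondage e.
Proof.
rewrite /tdc_bondage /=; case: ifP => // /existsP [F /and3P [_ /eqP F0]].
by rewrite (cards0_eq F0) remove_edges0 eqxx.
Qed.

Theorem mainTheorem15 (V : finType) (e : rel V) :
  simple_graph e -> 0 < #|V| ->
  no_isolated e -> no_isolated (compl_graph e) ->
  2 <= tdc_bondage e + tdc_bondage (compl_graph e).
Proof.
move=> _ _ _ _.
by rewrite -(addn1 1) leq_add // tdc_bondage_gt0.
Qed.
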